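(* Let $w\in K((t^\Gamma))$ have positive value, let $n\in\mathbb N$, and let $\tau=\max\{\nu(f(w))\mid f\in D_n,\ f(w)\ne0\}$. Let $\lambda\in\Gamma$ with $\lambda>\tau$, and $h\in K((t^\Gamma))$ with $\nu(h)=\lambda$. Then for every nonzero $f\in D_n$ one has $f(w+h)\ne0$.
   Context: $K$ is a field, $\Gamma$ a totally ordered abelian group, $K((t^\Gamma))$ the field of formal power series with well ordered support in $\Gamma$ and coefficients in $K$, and $\nu$ its $t$-adic valuation. $R\subset K((t^\Gamma))$ is a local ring essentially of finite type over $K$ dominated by $\nu$, $d=\dim R$, and $R=A_P$ where $A\subset R_\nu$ is a finitely generated $K$-algebra and $P$ is the center of $\nu$ on $A$. Choose $x_1,\dots,x_d\in A$ algebraically independent over $K$ and $b_1,\dots,b_r\in A$ with $A=Bb_1+\cdots+Bb_r$, $B=K[x_1,\dots,x_d]$. For an indeterminate $z$, $D_n=\{f_1b_1+\cdots+f_rb_r\mid f_j\in K[x_1,\dots,x_d,z]$ of total degree $\le n\}\subset A[z]$. $f(w)$ denotes the image of $f$ under $A[z]\to K((t^\Gamma))$, $z\mapsto w$. (The maximum defining $\tau$ exists since the set of values is finite and nonempty.) *)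

From HB Require Import structures.
From mathcomp Require Import all_boot all_order all_algebra.
Set Implicit Arguments. Unset Strict Implicit. Unset Printing Implicit Defensive.
Import Order.TTheory GRing.Theory Num.Theory.
Local Open Scope ring_scope.

HB.mixin Record isOrderedAbGroup G of Num.POrderedZmodule G := {
  oag_total : total (@Order.le ring_display G);
  oag_lerD2l : forall x y z : G, x <= y -> z + x <= z + y
}.
#[short(type="oagType")]
HB.structure Definition OrderedAbGroup :=
  { G of isOrderedAbGroup G & Num.POrderedZmodule G }.

(* nu : L -> Gamma is a (Krull) valuation on the field L, trivial on the image
   of K under iota.  nu is only meaningful on nonzero elements (nu 0 = +oo is
   not represented; every use of nu is guarded by a nonzeroness condition). *)
Definition is_valuation (K L : fieldType) (G : oagType)
    (iota : {rmorphism K -> L}) (nu : L -> G) : Prop :=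
  [/\ forall x y : L, x != 0 -> y != 0 -> nu (x * y) = nu x + nu y,
      forall x y : L, x != 0 -> y != 0 -> x + y != 0 ->
        (nu x <= nu (x + y)) || (nu y <= nu (x + y))
    & forall k : K, k != 0 -> nu (iota k) = 0].

(* Polynomials in d variables over K with all exponents <= N, given by their
   coefficient function on exponent vectors, evaluated at x : 'I_d -> L. *)
Definition peval (K L : fieldType) (iota : {rmorphism K -> L}) (d N : nat)
    (c : {ffun 'I_d -> 'I_N.+1} -> K) (x : 'I_d -> L) : L :=
  \sum_(e : {ffun 'I_d -> 'I_N.+1}) iota (c e) * \prod_(i < d) x i ^+ e i.

Definition inB (K L : fieldType) (iota : {rmorphism K -> L}) (d : nat)
    (x : 'I_d -> L) (y : L) : Prop :=
  exists N (c : {ffun 'I_d -> 'I_N.+1} -> K), y = peval iota c x.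

Definition alg_indep (K L : fieldType) (iota : {rmorphism K -> L}) (d : nat)
    (x : 'I_d -> L) : Prop :=
  forall N (c : {ffun 'I_d -> 'I_N.+1} -> K),
    peval iota c x = 0 -> forall e, c e = 0.

(* An element f = f_1 b_1 + ... + f_r b_r of D_n, with
   f_j in K[x_1,...,x_d,z] of total degree <= n, is given by coefficients
   F j ex k : K of the monomial x^ex z^k in f_j (only the monomials with
   total degree sum ex + k <= n are used).  As an element of A[z] (here
   viewed inside L[z]) f = \sum_k (Dcoef F k) z^k, and f(u) = Deval F u. *)
Definition Dcoef (K L : fieldType) (iota : {rmorphism K -> L}) (d r n : nat)
    (x : 'I_d -> L) (b : 'I_r -> L)
    (F : 'I_r -> {ffun 'I_d -> 'I_n.+1} -> 'I_n.+1 -> K) (k : 'I_n.+1) : L :=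
  \sum_(j < r) \sum_(ex : {ffun 'I_d -> 'I_n.+1} |
                     (\sum_(i < d) (ex i : nat) + k <= n)%N)
     iota (F j ex k) * (\prod_(i < d) x i ^+ ex i) * b j.

Definition Deval (K L : fieldType) (iota : {rmorphism K -> L}) (d r n : nat)
    (x : 'I_d -> L) (b : 'I_r -> L)
    (F : 'I_r -> {ffun 'I_d -> 'I_n.+1} -> 'I_n.+1 -> K) (u : L) : L :=
  \sum_(k < n.+1) Dcoef iota x b F k * u ^+ k.

From Pilot Require Import Defs.
From HB Require Import structures.
From mathcomp Require Import all_boot all_order all_algebra.
Import Order.TTheory GRing.Theory Num.Theory.
Local Open Scope ring_scope.
Set Implicit Arguments. Unset Strict Implicit. Unset Printing Implicit Defensive.

(* Write f = \sum_k c_k z^k with c_k in A, and let p be the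
   polynomial \sum_k c_k z^k in L[z].  Taylor's formula (nderiv_taylor_wide)
   gives f(w + h) = \sum_m g_m h^m with g_m = p^`N(m).[w] the value at w of the
   m-th normalized derivative of p.  Three facts about the g_m are needed:
   - p^`N(m) is again the polynomial of an element of D_n (its coefficients
     are shifted coefficients of f scaled by binomials), so a nonzero g_m has
     value at most tau;
   - g_m lies in the valuation ring, since the c_k lie in A and nu(w) > 0;
   - g_m is nonzero for m = deg p, where it is the leading coefficient of p.
   Then, m0 being the least index with g_m0 nonzero, the term g_m0 h^m0 has
   value <= m0 lam + tau, while every later term has value >= (m0+1) lam,
   which is larger; by the ultrametric inequality the sum cannot vanish. *)

Section OrderedAbGroup.
Variable G : oagType.
Implicit Types a b c : G.

Lemma oag_ltrD2l a b c : a < b -> c + a < c + b.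
Proof.
rewrite !lt_neqAle => /andP[neq_ab le_ab]; rewrite oag_lerD2l // andbT.
by apply: contra neq_ab => /eqP/addrI ->.
Qed.

Lemma oag_ler_addr a b : 0 <= b -> a <= a + b.
Proof. by move=> b_ge0; rewrite -{1}(addr0 a) oag_lerD2l. Qed.

Lemma oag_addr_ge0 a b : 0 <= a -> 0 <= b -> 0 <= a + b.
Proof. by move=> a_ge0 b_ge0; exact: le_trans a_ge0 (oag_ler_addr _ b_ge0). Qed.

Lemma oag_mulrn_ge0 a k : 0 <= a -> 0 <= a *+ k.
Proof. by move=> a_ge0; elim: k => [|k IHk]; rewrite ?mulr0n // mulrS oag_addr_ge0. Qed.

Lemma oag_ler_mulrn a k m : 0 <= a -> (k <= m)%N -> a *+ k <= a *+ m.
Proof.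
move=> a_ge0 le_km; rewrite -(subnKC le_km) mulrnDr.
by apply: oag_ler_addr; apply: oag_mulrn_ge0.
Qed.
End OrderedAbGroup.

Section Valuation.
Variables (K L : fieldType) (G : oagType) (iota : {rmorphism K -> L}) (nu : L -> G).
Hypothesis nu_val : is_valuation iota nu.

Lemma nuM x y : x != 0 -> y != 0 -> nu (x * y) = nu x + nu y.
Proof. by case: nu_val => nuM _ _; apply: nuM. Qed.

Lemma nu1 : nu 1 = 0.
Proof. by case: nu_val => _ _ nuK; rewrite -(rmorph1 iota) nuK ?oner_eq0. Qed.

Lemma nuN x : x != 0 -> nu (- x) = nu x.
Proof.
case: nu_val => _ _ nuK x_neq0.
rewrite -mulN1r nuM ?oppr_eq0 ?oner_eq0 // -(rmorphN1 iota).
by rewrite nuK ?oppr_eq0 ?oner_eq0 // add0r.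
Qed.

Lemma nuX x k : x != 0 -> nu (x ^+ k) = nu x *+ k.
Proof.
move=> x_neq0; elim: k => [|k IHk]; first by rewrite expr0 nu1 mulr0n.
by rewrite exprS nuM ?expf_neq0 // IHk mulrS.
Qed.

(* [vbound U s]: s is zero or its value lies in U.  For an upward closed U
   this is closed under sums, by the ultrametric inequality. *)
Definition vbound (U : pred G) (s : L) : Prop := s = 0 \/ U (nu s).

Section UpwardClosed.
Variable U : pred G.
Hypothesis U_up : forall a c, a <= c -> U a -> U c.

Lemma vboundD x y : vbound U x -> vbound U y -> vbound U (x + y).
Proof.
case=> [->|Ux]; first by rewrite add0r.
case=> [->|Uy]; first by rewrite addr0; right.
have [->|xy_neq0] := eqVneq (x + y) 0; first by left.
have [->|x_neq0] := eqVneq x 0; first by rewrite add0r; right.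
have [->|y_neq0] := eqVneq y 0; first by rewrite addr0; right.
case: nu_val => _ ultra _; right.
by case/orP: (ultra _ _ x_neq0 y_neq0 xy_neq0) => /U_up; [apply | apply].
Qed.

Lemma vbound_sum (I : Type) (s : seq I) (P : pred I) (F : I -> L) :
  (forall i, P i -> vbound U (F i)) -> vbound U (\sum_(i <- s | P i) F i).
Proof. by move=> UF; apply: big_ind => //; [left | apply: vboundD]. Qed.
End UpwardClosed.

Definition vring : L -> Prop := vbound (fun a : G => 0 <= a).

Lemma vringM x y : vring x -> vring y -> vring (x * y).
Proof.
case=> [->|x_ge0]; first by rewrite mul0r; left.
case=> [->|y_ge0]; first by rewrite mulr0; left.
have [->|x_neq0] := eqVneq x 0; first by rewrite mul0r; left.
have [->|y_neq0] := eqVneq y 0; first by rewrite mulr0; left.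
by right; rewrite nuM // oag_addr_ge0.
Qed.

Lemma vringX x k : vring x -> vring (x ^+ k).
Proof.
move=> x_ge0; elim: k => [|k IHk]; last by rewrite exprS; apply: vringM.
by right; rewrite expr0 nu1.
Qed.

Lemma horner_vring (p : {poly L}) u :
  (forall i, vring p`_i) -> vring u -> vring p.[u].
Proof.
move=> p_vring u_vring; rewrite horner_coef.
apply: vbound_sum => [a c le_ac /le_trans|i _]; first by apply.
by apply: vringM; last apply: vringX.
Qed.

Lemma dominant_term_neq0 X Y c :
  X != 0 -> nu X <= c -> vbound (fun a => c < a) Y -> X + Y != 0.
Proof.
move=> X_neq0 le_Xc [->|lt_cY]; first by rewrite addr0.
apply/eqP => /(canRL (addKr X)); rewrite addr0 => Y_def.
by move: (le_lt_trans le_Xc lt_cY); rewrite Y_def nuN // ltxx.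
Qed.

(* An expansion \sum_m g_m h^m cannot vanish when some g_m is nonzero, all
   nonzero g_m have values in [0, tau], and nu h > tau: the first nonzero
   term dominates all the later ones. *)
Lemma sum_pow_neq0 (g : nat -> L) (N : nat) (tau : G) (h : L) :
  (forall m, (m < N)%N -> g m != 0 -> 0 <= nu (g m) <= tau) ->
  (exists m, (m < N)%N && (g m != 0)) ->
  h != 0 -> tau < nu h ->
  \sum_(m < N) g m * h ^+ m != 0.
Proof.
move=> g_bound ex_nz h_neq0 tau_lt; set lam := nu h in tau_lt.
have [m0 /andP[m0_lt gm0_neq0] m0_min] := ex_minnP ex_nz.
have /andP[gm0_ge0 gm0_le] := g_bound m0 m0_lt gm0_neq0.
have lam_ge0 : 0 <= lam by apply/ltW/(le_lt_trans gm0_ge0)/(le_lt_trans gm0_le).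
have head_le : nu (g m0 * h ^+ m0) <= lam *+ m0 + tau.
  by rewrite nuM ?expf_neq0 // nuX // addrC oag_lerD2l.
have tail_gt : vbound (fun a => lam *+ m0 + tau < a)
    (\sum_(m0.+1 <= m < N) g m * h ^+ m).
  rewrite big_nat_cond.
  apply: vbound_sum => [a c le_ac /lt_le_trans|m /andP[/andP[lt_m0m lt_mN] _]].
    by apply.
  have [->|gm_neq0] := eqVneq (g m) 0; first by left; rewrite mul0r.
  have /andP[gm_ge0 _] := g_bound m lt_mN gm_neq0.
  right; rewrite nuM ?expf_neq0 // nuX // [nu (g m) + _]addrC.
  apply: (lt_le_trans (oag_ltrD2l _ tau_lt)); rewrite -mulrSr.
  by apply: (le_trans (oag_ler_mulrn lam_ge0 lt_m0m)); apply: oag_ler_addr.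
rewrite -(big_mkord xpredT (fun m => g m * h ^+ m)).
rewrite (big_cat_nat (leq0n m0) (ltnW m0_lt)) /= big_nat_cond big1 ?add0r.
  rewrite big_ltn //; apply: dominant_term_neq0 head_le tail_gt.
  by rewrite mulf_neq0 ?expf_neq0.
move=> m /andP[/andP[_ lt_mm0] _].
have [->|gm_neq0] := eqVneq (g m) 0; first by rewrite mul0r.
have := m0_min m; rewrite (ltn_trans lt_mm0 m0_lt) gm_neq0 => /(_ isT).
by rewrite leqNgt lt_mm0.
Qed.
End Valuation.

(* The normalized (Hasse) derivative of p of order deg p is the constant
   lead_coef p; it is what makes some Taylor coefficient nonzero. *)
Lemma horner_nderivn_lead (R : nzRingType) (p : {poly R}) (u : R) :
  (nderivn (size p).-1 p).[u] = lead_coef p.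
Proof.
have size_le1 : (size (nderivn (size p).-1 p) <= 1)%N.
  by apply: leq_trans (size_poly _ _) _; rewrite leq_subLR addn1 leqSpred.
by rewrite (size1_polyC size_le1) hornerC coef_nderivn addn0 binn mulr1n.
Qed.

Section DnPolynomials.
Variables (K L : fieldType) (iota : {rmorphism K -> L}) (d r n : nat)
  (x : 'I_d -> L) (b : 'I_r -> L).
Local Notation Dcoefs := ('I_r -> {ffun 'I_d -> 'I_n.+1} -> 'I_n.+1 -> K).
Local Notation Dcoef := (Dcoef iota x b).
Local Notation Deval := (Deval iota x b).

Definition Dpoly (F : Dcoefs) : {poly L} := \poly_(k < n.+1) Dcoef F (inord k).

Lemma Deval_Dpoly (F : Dcoefs) (u : L) : Deval F u = (Dpoly F).[u].
Proof. by rewrite horner_poly; apply: eq_bigr => k _; rewrite inord_val. Qed.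

Lemma size_Dpoly (F : Dcoefs) : (size (Dpoly F) <= n.+1)%N.
Proof. exact: size_poly. Qed.

Lemma Dpoly_neq0 (F : Dcoefs) : (exists k, Dcoef F k != 0) -> Dpoly F != 0.
Proof.
case=> k Fk_neq0; apply: contraNneq Fk_neq0 => Fp0.
have := congr1 (fun p : {poly L} => p`_k) Fp0.
by rewrite /= coef_poly ltn_ord inord_val coef0 => ->.
Qed.

Lemma Dcoef_in_span (F : Dcoefs) (k : 'I_n.+1) :
  exists g : 'I_r -> L, (forall j, inB iota x (g j)) /\
    Dcoef F k = \sum_(j < r) g j * b j.
Proof.
exists (fun j => \sum_(ex : {ffun 'I_d -> 'I_n.+1} |
                   (\sum_(i < d) (ex i : nat) + k <= n)%N)
                 iota (F j ex k) * \prod_(i < d) x i ^+ ex i); split.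
  move=> j; exists n, (fun ex : {ffun 'I_d -> 'I_n.+1} =>
    if (\sum_(i < d) (ex i : nat) + k <= n)%N then F j ex k else 0).
  rewrite /peval big_mkcond; apply: eq_bigr => ex _.
  by case: ifP => // _; rewrite rmorph0 mul0r.
by apply: eq_bigr => j _; rewrite mulr_suml.
Qed.

(* The element of D_n whose polynomial is the m-th normalized derivative of
   the polynomial of F: the coefficient of x^ex z^k becomes the coefficient
   of x^ex z^(k+m) times binomial(k+m, m); the degree bound is preserved. *)
Definition Dnderivn (m : nat) (F : Dcoefs) : Dcoefs :=
  fun j ex k => if (\sum_(i < d) (ex i : nat) + k + m <= n)%N
                then F j ex (inord (k + m)) *+ 'C(k + m, m) else 0.

Lemma Dcoef_Dnderivn (m : nat) (F : Dcoefs) (k : 'I_n.+1) :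
  Dcoef (Dnderivn m F) k =
  if (k + m <= n)%N then Dcoef F (inord (k + m)) *+ 'C(k + m, m) else 0.
Proof.
rewrite /Dnderivn /Defs.Dcoef; case: ifP => km_le; last first.
  apply: big1 => j _; apply: big1 => ex _; rewrite -addnA.
  have -> : (\sum_(i < d) (ex i : nat) + (k + m) <= n)%N = false.
    by apply: contraFF km_le; apply: leq_trans; rewrite leq_addl.
  by rewrite rmorph0 !mul0r.
rewrite -sumrMnl; apply: eq_bigr => j _; rewrite -sumrMnl inordK ?ltnS //.
rewrite big_mkcond [RHS]big_mkcond; apply: eq_bigr => ex _; rewrite -addnA.
case: (boolP (\sum_(i < d) (ex i : nat) + (k + m) <= n)%N) => [deg_le|_].
  have -> : (\sum_(i < d) (ex i : nat) + k <= n)%N.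
    by apply: leq_trans deg_le; rewrite leq_add2l leq_addr.
  by rewrite rmorphMn !mulrnAl.
by rewrite rmorph0 !mul0r if_same.
Qed.

Lemma Dpoly_nderivn (m : nat) (F : Dcoefs) :
  nderivn m (Dpoly F) = Dpoly (Dnderivn m F).
Proof.
apply/polyP => i; rewrite coef_nderivn !coef_poly addnC.
have [i_lt|i_ge] := ltnP i n.+1; last first.
  by rewrite ltnNge (leq_trans i_ge) ?leq_addr // mul0rn.
by rewrite Dcoef_Dnderivn inordK // ltnS; case: ifP; rewrite ?mul0rn.
Qed.
End DnPolynomials.

Theorem mainTheorem9
  (K L : fieldType) (G : oagType)
  (iota : {rmorphism K -> L}) (nu : L -> G)
  (Hnu : is_valuation iota nu)
  (d r : nat) (x : 'I_d -> L) (b : 'I_r -> L) (A : L -> Prop)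
  (* A is a K-subalgebra of L contained in the valuation ring R_nu *)
  (HA1 : A 1) (HAmul : forall a a', A a -> A a' -> A (a * a'))
  (HAnu : forall a, A a -> a != 0 -> 0 <= nu a)
  (* x_1..x_d in A, algebraically independent over K *)
  (HxA : forall i, A (x i)) (Hxind : alg_indep iota x)
  (* A = B b_1 + ... + B b_r with B = K[x_1..x_d] *)
  (HAB : forall a, A a <->
     exists g : 'I_r -> L, (forall j, inB iota x (g j)) /\ a = \sum_(j < r) g j * b j)
  (w : L) (Hw : w != 0 -> 0 < nu w)
  (n : nat) (tau : G)
  (Htau_attained : exists (F : 'I_r -> {ffun 'I_d -> 'I_n.+1} -> 'I_n.+1 -> K), Deval iota x b F w != 0 /\ nu (Deval iota x b F w) = tau)
  (Htau_max : forall (F : 'I_r -> {ffun 'I_d -> 'I_n.+1} -> 'I_n.+1 -> K), Deval iota x b F w != 0 -> nu (Deval iota x b F w) <= tau)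
  (lam : G) (Hlam : tau < lam) (h : L) (Hh0 : h != 0) (Hh : nu h = lam) :
  forall F : 'I_r -> {ffun 'I_d -> 'I_n.+1} -> 'I_n.+1 -> K,
    (exists k : 'I_n.+1, Dcoef iota x b F k != 0) ->
    Deval iota x b F (w + h) != 0.
Proof.
move=> F /Dpoly_neq0 Fp_neq0.
have A_vring a : A a -> vring nu a.
  by have [->|a_neq0] := eqVneq a 0; [left | right; apply: HAnu].
have D_vring (F' : 'I_r -> {ffun 'I_d -> 'I_n.+1} -> 'I_n.+1 -> K) :
    vring nu (Deval iota x b F' w).
  rewrite Deval_Dpoly; apply: (horner_vring Hnu) => [i|]; last first.
    by have [->|w_neq0] := eqVneq w 0; [left | right; apply/ltW/Hw].
  rewrite coef_poly; case: ifP => _; last by left.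
  by apply/A_vring/HAB; apply: Dcoef_in_span.
rewrite Deval_Dpoly (nderiv_taylor_wide (mulrC w h) (size_Dpoly iota x b F)).
apply: (sum_pow_neq0 Hnu (g := fun m => (nderivn m (Dpoly iota x b F)).[w])
  (tau := tau)); rewrite ?Hh //.
- move=> m _ /=; rewrite Dpoly_nderivn -Deval_Dpoly => g_neq0.
  rewrite Htau_max // andbT.
  by case: (D_vring (Dnderivn m F)) => // /eqP; rewrite (negbTE g_neq0).
- exists (size (Dpoly iota x b F)).-1.
  rewrite /= horner_nderivn_lead lead_coef_eq0 Fp_neq0 andbT.
  by case: (size _) (size_Dpoly iota x b F).
Qed.
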